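(* Let $\mathfrak A,\mathfrak B\in K_{\overline\alpha}$ with $\mathfrak A\le\mathfrak B$. Assume $(\mathfrak B,\mathfrak C)$ is an essential minimal pair and let $\gamma=-\delta(\mathfrak C/\mathfrak B)$. Then: (1) there is $\mathfrak D\in K_{\overline\alpha}$ with $\mathfrak B\subseteq\mathfrak D$, $\mathfrak A\le\mathfrak D$ and $0\le\delta(\mathfrak D/\mathfrak A)<\gamma$, such that moreover, for every minimal pair $(\mathfrak B,\mathfrak G)$ with $|G|<|C|$, $\mathfrak G$ does not embed into $\mathfrak D$ over $\mathfrak B$; (2) if $\delta(\mathfrak A)\ge\gamma$, then there is $\mathfrak D\in K_{\overline\alpha}$ with $\mathfrak B\subseteq\mathfrak D$ such that $(\mathfrak A,\mathfrak D)$ is an essential minimal pair satisfying $0>\delta(\mathfrak D/\mathfrak A)\ge-\gamma$.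
   Context: Fix a finite relational language $L$ in which every relation symbol has arity at least $2$. $K_L$ is the class of all finite $L$-structures (including the empty one) in which every relation symbol is interpreted symmetrically and irreflexively. Fix $\overline\alpha:L\to(0,1]$, writing $\overline\alpha_E=\overline\alpha(E)$, such that it is not the case that all symbols of $L$ are binary and $\overline\alpha_E=1$ for all $E$. For $\mathfrak A\in K_L$ let $N_E(\mathfrak A)$ be the number of subsets of $A$ on which $E$ holds and $\delta(\mathfrak A)=|A|-\sum_{E}\overline\alpha_E N_E(\mathfrak A)$. $K_{\overline\alpha}=\{\mathfrak A\in K_L:\delta(\mathfrak A')\ge0\text{ for all substructures }\mathfrak A'\subseteq\mathfrak A\}$. Subsets are identified with induced substructures; for substructures $X,Y$ of a common structure, $\delta(X/Y)=\delta(X\cup Y)-\delta(Y)$. For $\mathfrak A\subseteq\mathfrak B$, $\mathfrak A\le\mathfrak B$ means $\delta(\mathfrak A)\le\delta(\mathfrak A')$ for all $\mathfrak A\subseteq\mathfrak A'\subseteq\mathfrak B$; $(\mathfrak A,\mathfrak B)$ is a minimal pair if $\mathfrak A\subseteq\mathfrak B$, $\mathfrak A\le\mathfrak C$ for all $\mathfrak A\subseteq\mathfrak C\subsetneq\mathfrak B$, but $\mathfrak A\not\le\mathfrak B$. For $\mathfrak B\in K_{\overline\alpha}$ with $\delta(\mathfrak B)>0$, a structure $\mathfrak D\in K_{\overline\alpha}$ with $\mathfrak B\subseteq\mathfrak D$ forms an essential minimal pair $(\mathfrak B,\mathfrak D)$ if $(\mathfrak B,\mathfrak D)$ is a minimal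 pair and $\delta(\mathfrak D'/\mathfrak D'\cap\mathfrak B)\ge0$ for every substructure $\mathfrak D'\subsetneq\mathfrak D$. *)

From HB Require Import structures.
From mathcomp Require Import all_boot all_order all_algebra.
From mathcomp Require Import finmap.
From mathcomp Require Import reals.
Set Implicit Arguments. Unset Strict Implicit. Unset Printing Implicit Defensive.
Import Order.TTheory GRing.Theory Num.Theory.
Local Open Scope fset_scope.
Local Open Scope ring_scope.

(* Since every relation is symmetric and irreflexive (holds only on tuples
   of pairwise distinct elements, invariant under permutation), the
   interpretation of a symbol E of arity (ar E) is recorded as the set of
   (ar E)-element subsets of the universe on which E holds. *)
Record struct (L : finType) := Struct {
  dom : {fset nat};
  rel : L -> {fset {fset nat}} }.

Section Defs.
Variables (L : finType) (ar : L -> nat) (R : realType) (alpha : L -> R).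

Definition wf (S : struct L) : Prop :=
  forall E s, s \in rel S E -> s `<=` dom S /\ #|` s| = ar E.

Definition induced (S : struct L) (X : {fset nat}) : struct L :=
  Struct X (fun E => [fset s | s in rel S E & s `<=` X]).

Definition sub (A B : struct L) : Prop :=
  dom A `<=` dom B /\ forall E, rel A E = [fset s | s in rel B E & s `<=` dom A].

Definition N (S : struct L) (E : L) : nat := #|` rel S E|.

Definition delta (S : struct L) : R :=
  (#|` dom S|)%:R - \sum_(E : L) alpha E * (N S E)%:R.

Definition deltaRel (S : struct L) (X Y : {fset nat}) : R :=
  delta (induced S (X `|` Y)) - delta (induced S Y).

Definition inK (S : struct L) : Prop :=
  wf S /\ forall X, X `<=` dom S -> 0 <= delta (induced S X).

Definition le (A B : struct L) : Prop :=
  sub A B /\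
  forall X, dom A `<=` X -> X `<=` dom B -> delta A <= delta (induced B X).

Definition minpair (A B : struct L) : Prop :=
  [/\ sub A B,
      (forall X, dom A `<=` X -> X `<` dom B -> le A (induced B X))
    & ~ le A B].

Definition essential (B D : struct L) : Prop :=
  [/\ inK B /\ 0 < delta B, inK D, sub B D,
      minpair B D
    & forall X, X `<` dom D -> 0 <= deltaRel D X (X `&` dom B)].

Definition embeds_over (B G D : struct L) : Prop :=
  exists f : nat -> nat,
    [/\ {in dom G &, injective f},
        (forall x, x \in dom B -> f x = x),
        (forall x, x \in dom G -> f x \in dom D)
      & (forall E s, s `<=` dom G -> (s \in rel G E) = ((f @` s) \in rel D E))].

End Defs.

From Pilot Require Import Defs.
From HB Require Import structures.
From mathcomp Require Import all_boot all_order all_algebra.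
From mathcomp Require Import finmap.
From mathcomp Require Import reals.
From mathcomp Require Import ring lra.
Import Order.TTheory GRing.Theory Num.Theory.
Local Open Scope fset_scope.
Local Open Scope ring_scope.
Set Implicit Arguments. Unset Strict Implicit. Unset Printing Implicit Defensive.

(* Glue k copies of C freely over B. Each copy lowers delta by gamma, and since
   (B, C) is essential the amalgam D_k keeps the two features of C: a subset X
   of D_k that misses part of B, or has fewer elements than C, satisfies
   delta(X) >= delta(X /\ B), while a proper subset containing B has delta at
   least delta(D_k) + gamma. Choosing k as the integer part of
   (delta(B) - delta(A)) / gamma, D_k is the structure of (1): a minimal pair
   over B smaller than C embedded in D_k would violate the first property; and
   D_(k+1) is the structure of (2). *)

Lemma truncn_mul_bounds (R : archiRealFieldType) (x g : R) : 0 <= x -> 0 < g ->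
  (Num.truncn (x / g))%:R * g <= x < (Num.truncn (x / g)).+1%:R * g.
Proof.
move=> x_ge0 g_gt0; have /andP[lo hi] := truncn_itv (divr_ge0 x_ge0 (ltW g_gt0)).
by rewrite -ler_pdivlMr // -ltr_pdivrMr // lo hi.
Qed.

Section FsetImage.
Variables (K V : choiceType) (f : K -> V).

Lemma fsubset_imfsetP (D : {fset K}) (Z : {fset V}) :
  Z `<=` f @` D -> exists2 Z0 : {fset K}, Z0 `<=` D & f @` Z0 = Z.
Proof.
move=> ZD; exists [fset x in D | f x \in Z].
  by apply/fsubsetP => x; rewrite !inE => /andP[].
apply/fsetP => y; apply/imfsetP/idP => [[x /=]|yZ].
  by rewrite !inE => /andP[_ fxZ] ->.
have /imfsetP [x /= xD yfx] := fsubsetP ZD y yZ.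
by exists x => //; rewrite !inE -yfx yZ andbT.
Qed.

Lemma imfset_inj_sub (D s t : {fset K}) : {in D &, injective f} ->
  s `<=` D -> t `<=` D -> f @` s = f @` t -> s = t.
Proof.
move=> f_inj sD tD st.
suff imfset_sub u v : u `<=` D -> v `<=` D -> f @` u = f @` v -> u `<=` v.
  by apply/eqP; rewrite eqEfsubset (imfset_sub s t) ?(imfset_sub t s).
move=> uD vD uv; apply/fsubsetP => x xu.
have /imfsetP [y /= yv fxy] : f x \in f @` v by rewrite -uv; apply/imfsetP; exists x.
have -> // : x = y by apply: f_inj => //; [exact: (fsubsetP uD) | exact: (fsubsetP vD)].
Qed.

Lemma card_imfset_sub (D s : {fset K}) : {in D &, injective f} -> s `<=` D ->
  #|` f @` s| = #|` s|.
Proof.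
move=> f_inj sD; apply/eqP/card_in_imfsetP => x y xs ys.
by apply: f_inj; [exact: (fsubsetP sD) | exact: (fsubsetP sD)].
Qed.

End FsetImage.

Section Predimension.
Variables (L : finType) (ar : L -> nat) (R : realType) (alpha : L -> R).
Implicit Types (A B C D G S T : struct L) (r : {fset {fset nat}}).
Implicit Types (U V W X Y Z : {fset nat}).

Definition rel_within (r : {fset {fset nat}}) (X : {fset nat}) :=
  [fset s | s in r & s `<=` X].

Definition delta_in (S : struct L) (X : {fset nat}) : R := delta alpha (induced S X).

Lemma in_rel_within r X s : (s \in rel_within r X) = (s \in r) && (s `<=` X).
Proof. by rewrite !inE. Qed.

Lemma rel_within_sub r X Y : X `<=` Y -> rel_within (rel_within r Y) X = rel_within r X.
Proof.
move=> XY; apply/fsetP => s; rewrite !in_rel_within -andbA.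
by case sX: (s `<=` X); rewrite ?andbF // (fsubset_trans sX XY).
Qed.

Lemma delta_inE S X : delta_in S X =
  (#|` X|)%:R - \sum_E alpha E * (#|` rel_within (Defs.rel S E) X|)%:R.
Proof. by []. Qed.

Lemma sub_rel A S E : sub A S -> Defs.rel A E = rel_within (Defs.rel S E) (dom A).
Proof. by case=> _ ->. Qed.

Lemma delta_in_sub A S Z : sub A S -> Z `<=` dom A -> delta_in A Z = delta_in S Z.
Proof.
move=> sAS ZA; rewrite !delta_inE; congr (_ - _); apply: eq_bigr => E _.
by rewrite (sub_rel E sAS) rel_within_sub.
Qed.

Lemma delta_sub A S : sub A S -> delta alpha A = delta_in S (dom A).
Proof.
move=> sAS; rewrite delta_inE; congr (_ - _); apply: eq_bigr => E _.
by rewrite /N (sub_rel E sAS).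
Qed.

Lemma delta_in_induced S X Y : Y `<=` X -> delta_in (induced S X) Y = delta_in S Y.
Proof.
move=> YX; rewrite !delta_inE; congr (_ - _); apply: eq_bigr => E _.
by rewrite -[Defs.rel _ _]/(rel_within _ X) rel_within_sub.
Qed.

Lemma delta_in_dom B S : sub B S -> delta_in B (dom B) = delta alpha B.
Proof. by move=> sBS; rewrite (delta_sub sBS) (delta_in_sub sBS). Qed.

Lemma deltaRelE S X Y : Y `<=` X -> deltaRel alpha S X Y = delta_in S X - delta_in S Y.
Proof. by move=> YX; rewrite /deltaRel (fsetUidPl _ _ YX). Qed.

Lemma sub_refl S : wf ar S -> sub S S.
Proof.
move=> wS; split=> // E; apply/fsetP => s; rewrite -[RHS]/(s \in rel_within _ _).
by rewrite in_rel_within; case sS: (s \in _) => //; case/wS: sS.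
Qed.

Lemma sub_trans A B C : sub A B -> sub B C -> sub A C.
Proof.
move=> sAB sBC; have [AB _] := sAB; have [BC _] := sBC.
split=> [|E]; first exact: fsubset_trans AB BC.
by rewrite (sub_rel E sAB) (sub_rel E sBC) rel_within_sub.
Qed.

Lemma sub_induced A D X : sub A D -> dom A `<=` X -> sub A (induced D X).
Proof. by move=> sAD AX; split=> // E; rewrite (sub_rel E sAD) -(rel_within_sub _ AX). Qed.

Hypothesis alpha_ge0 : forall E, 0 <= alpha E.

Lemma card_rel_within_supermod r U V :
  (#|` rel_within r U| + #|` rel_within r V| <=
   #|` rel_within r (U `|` V)| + #|` rel_within r (U `&` V)|)%N.
Proof.
rewrite -cardfsUI.
have -> : rel_within r U `&` rel_within r V = rel_within r (U `&` V).
  by apply/fsetP => s; rewrite in_fsetI !in_rel_within fsubsetI andbACA andbb.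
rewrite leq_add2r fsubset_leq_card //; apply/fsubsetP => s.
rewrite in_fsetU !in_rel_within => /orP[] /andP[-> sW] /=.
  exact: fsubset_trans sW (fsubsetUl _ _).
exact: fsubset_trans sW (fsubsetUr _ _).
Qed.

Lemma delta_in_submod S U V :
  delta_in S (U `|` V) + delta_in S (U `&` V) <= delta_in S U + delta_in S V.
Proof.
pose w X := \sum_E alpha E * (#|` rel_within (Defs.rel S E) X|)%:R.
have cards : (#|` U `|` V|)%:R + (#|` U `&` V|)%:R = (#|` U|)%:R + (#|` V|)%:R :> R.
  by rewrite -!natrD cardfsUI.
have rels : w U + w V <= w (U `|` V) + w (U `&` V).
  rewrite -!big_split /=; apply: ler_sum => E _.
  by rewrite -!mulrDr ler_wpM2l // -!natrD ler_nat card_rel_within_supermod.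
rewrite /w in rels; rewrite !delta_inE; lra.
Qed.

Lemma le_delta_in_meet A B Y : le alpha A B -> Y `<=` dom B ->
  delta_in B (Y `&` dom A) <= delta_in B Y.
Proof.
move=> [sAB leAB] YB; have AB : dom A `<=` dom B by case: sAB.
have := delta_in_submod B Y (dom A).
have := leAB (Y `|` dom A) (fsubsetUr _ _); rewrite fsubUset YB AB => /(_ isT).
rewrite (delta_sub sAB) -/(delta_in _ _); lra.
Qed.

Definition embedding (f : nat -> nat) S T :=
  {in dom S &, injective f} /\
  forall E s, s `<=` dom S -> (s \in Defs.rel S E) = (f @` s \in Defs.rel T E).

Lemma rel_within_embedding f S T W E : embedding f S T -> W `<=` dom S ->
  rel_within (Defs.rel T E) (f @` W) =
  [fset f @` s | s : {fset nat} in rel_within (Defs.rel S E) W].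
Proof.
move=> [_ f_rel] WS; apply/fsetP => t; apply/idP/imfsetP => [|[s /= + ->]].
  rewrite in_rel_within => /andP[tT /fsubset_imfsetP [s sW st]]; exists s => //.
  by rewrite in_rel_within sW andbT f_rel ?(fsubset_trans sW WS) // st.
rewrite !in_rel_within => /andP[sS sW]; rewrite -f_rel ?(fsubset_trans sW WS) // sS.
by apply/subset_imfset/fsubsetP.
Qed.

Lemma delta_in_embedding f S T W : embedding f S T -> W `<=` dom S ->
  delta_in S W = delta_in T (f @` W).
Proof.
move=> emb WS; have [f_inj _] := emb.
rewrite !delta_inE (card_imfset_sub f_inj WS); congr (_ - _); apply: eq_bigr => E _.
rewrite (rel_within_embedding E emb WS); congr (_ * _%:R).
apply/esym/eqP/card_in_imfsetP => s t; rewrite !in_rel_within => /andP[_ sW] /andP[_ tW].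
exact: imfset_inj_sub f_inj (fsubset_trans sW WS) (fsubset_trans tW WS).
Qed.

Definition amalg D C : struct L :=
  Struct (dom D `|` dom C) (fun E => Defs.rel D E `|` Defs.rel C E).

Lemma rel_within_wf S X E : wf ar S ->
  rel_within (Defs.rel S E) X = rel_within (Defs.rel S E) (X `&` dom S).
Proof.
move=> wS; apply/fsetP => s; rewrite !in_rel_within fsubsetI.
by case sS: (s \in _) => //; case/wS: sS => ->; rewrite andbT.
Qed.

Section Amalgam.
Variables B D C : struct L.
Hypotheses (wD : wf ar D) (wC : wf ar C) (sBD : sub B D) (sBC : sub B C).
Hypothesis DC : dom D `&` dom C = dom B.

Lemma wf_amalg : wf ar (amalg D C).
Proof.
move=> E s; rewrite in_fsetU => /orP[/wD|/wC] [s_dom ->]; split=> //.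
  exact: fsubset_trans s_dom (fsubsetUl _ _).
exact: fsubset_trans s_dom (fsubsetUr _ _).
Qed.

Lemma in_rel_common E s :
  (s \in Defs.rel B E) = (s \in Defs.rel D E) && (s \in Defs.rel C E).
Proof.
have inB : (s \in Defs.rel D E) && (s `<=` dom B) = (s \in Defs.rel C E) && (s `<=` dom B).
  by rewrite -!in_rel_within -(sub_rel E sBD) -(sub_rel E sBC).
rewrite (sub_rel E sBD) in_rel_within; case sD: (s \in Defs.rel D E) => //=.
apply/idP/idP => [sB|sC]; first by move: inB; rewrite sD sB !andbT => <-.
by rewrite -DC fsubsetI; case/wD: sD => -> _; case/wC: sC.
Qed.

Lemma sub_amalgl : sub D (amalg D C).
Proof.
split=> [|E]; first exact: fsubsetUl.
apply/fsetP => s; rewrite -[RHS]/(s \in rel_within _ _) in_rel_within in_fsetU.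
case sD: (s \in Defs.rel D E) => /=; first by case/wD: sD => ->.
apply/esym/negbTE/negP => /andP[sC sDom].
have sB : s `<=` dom B by rewrite -DC fsubsetI sDom; case/wC: sC.
have : s \in Defs.rel B E by rewrite (sub_rel E sBC) in_rel_within sC.
by rewrite in_rel_common sD.
Qed.

Lemma card_amalg X : X `<=` dom D `|` dom C ->
  (#|` X| + #|` X `&` dom B| = #|` X `&` dom D| + #|` X `&` dom C|)%N.
Proof.
move=> XDC; rewrite -[in RHS]cardfsUI -fsetIUr (fsetIidPl XDC).
by rewrite fsetIACA fsetIid DC.
Qed.

Lemma card_rel_amalg X E :
  (#|` rel_within (Defs.rel (amalg D C) E) X| +
   #|` rel_within (Defs.rel B E) (X `&` dom B)| =
   #|` rel_within (Defs.rel D E) (X `&` dom D)| +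
   #|` rel_within (Defs.rel C E) (X `&` dom C)|)%N.
Proof.
rewrite -(rel_within_wf _ _ wD) -(rel_within_wf _ _ wC) -[in RHS]cardfsUI.
congr (_ + _)%N; congr (size (enum_fset _)); apply/fsetP => s.
  by rewrite in_fsetU !in_rel_within in_fsetU andb_orl.
rewrite in_fsetI !in_rel_within in_rel_common fsubsetI andbACA.
case sD: (s \in Defs.rel D E); case sC: (s \in Defs.rel C E) => //=.
have -> // : s `<=` dom B by rewrite -DC fsubsetI; case/wD: sD => -> _; case/wC: sC.
by rewrite andbb andbT.
Qed.

Lemma delta_in_amalg X : X `<=` dom D `|` dom C ->
  delta_in (amalg D C) X =
  delta_in D (X `&` dom D) + delta_in C (X `&` dom C) - delta_in B (X `&` dom B).
Proof.
move=> XDC; pose w S Y := \sum_E alpha E * (#|` rel_within (Defs.rel S E) Y|)%:R.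
have cards : (#|` X|)%:R + (#|` X `&` dom B|)%:R =
             (#|` X `&` dom D|)%:R + (#|` X `&` dom C|)%:R :> R.
  by rewrite -!natrD card_amalg.
have rels : w (amalg D C) X + w B (X `&` dom B) = w D (X `&` dom D) + w C (X `&` dom C).
  rewrite -!big_split /=; apply: eq_bigr => E _.
  by rewrite -!mulrDr -!natrD card_rel_amalg.
rewrite /w in rels; rewrite !delta_inE; lra.
Qed.

End Amalgam.

Definition essential_ext B C (gamma : R) :=
  [/\ wf ar C, sub B C, delta_in C (dom C) = delta alpha B - gamma
    & forall X, X `<` dom C -> delta_in B (X `&` dom B) <= delta_in C X].

Lemma essential_essential_ext B C : essential ar alpha B C ->
  essential_ext B C (- deltaRel alpha C (dom C) (dom B)).
Proof.
case=> _ [wC _] sBC _ ess; have BC : dom B `<=` dom C by case: sBC.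
split=> // [|X XC].
  by rewrite deltaRelE // (delta_sub sBC); lra.
have := ess X XC; rewrite deltaRelE ?fsubsetIl // subr_ge0.
by rewrite (delta_in_sub sBC) ?fsubsetIr.
Qed.

Lemma essential_ext_le B C gamma : essential_ext B C gamma -> gamma <= 0 -> le alpha B C.
Proof.
case=> _ sBC dC ess gamma_le0; split=> // X BX XC.
have [->|XneC] := eqVneq X (dom C); first by rewrite -/(delta_in _ _) dC; lra.
have := ess X; rewrite fproperEneq XneC XC (fsetIidPr BX) => /(_ isT).
by rewrite (delta_sub sBC) -(delta_in_sub sBC (fsubset_refl _)).
Qed.

Definition image_struct (f : nat -> nat) C : struct L :=
  Struct (f @` dom C) (fun E => [fset f @` s | s : {fset nat} in Defs.rel C E]).

Lemma embedding_image f C : wf ar C -> {in dom C &, injective f} ->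
  embedding f C (image_struct f C).
Proof.
move=> wC f_inj; split=> // E s sC; apply/idP/imfsetP => [sCE|[t tC /= st]].
  by exists s.
have tdom : t `<=` dom C by case/wC: tC.
by rewrite (imfset_inj_sub f_inj sC tdom st).
Qed.

Lemma wf_image f C : wf ar C -> {in dom C &, injective f} -> wf ar (image_struct f C).
Proof.
move=> wC f_inj E _ /imfsetP [s sC ->]; case/wC: sC => sdom <-; split.
  by apply/subset_imfset/fsubsetP.
exact: card_imfset_sub f_inj sdom.
Qed.

Lemma essential_ext_image B C gamma f : injective f -> {in dom B, f =1 id} ->
  essential_ext B C gamma -> essential_ext B (image_struct f C) gamma.
Proof.
move=> f_inj fB [wC sBC dC ess]; have BC : dom B `<=` dom C by case: sBC.
have emb := embedding_image wC (in2W f_inj).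
have fBid Y : Y `<=` dom B -> f @` Y = Y.
  move=> YB; rewrite -[RHS]imfset_id; apply: eq_in_imfset => x xY.
  exact/fB/(fsubsetP YB).
split.
- exact: wf_image (in2W f_inj).
- split=> [|E]; first by rewrite -(fBid _ (fsubset_refl _)); apply/subset_imfset/fsubsetP.
  apply/fsetP => s; rewrite (sub_rel E sBC) !in_rel_within.
  case sB: (s `<=` dom B); rewrite ?andbF // !andbT.
  by rewrite emb.2 ?(fsubset_trans sB BC) // fBid.
- by rewrite -dC (delta_in_embedding emb (fsubset_refl _)).
move=> Z /[dup] /fproper_sub /fsubset_imfsetP [Z0 Z0C <-] ZC.
have Z0neC : Z0 `<` dom C.
  by rewrite fproperEneq Z0C andbT; apply: contraTneq ZC => ->; rewrite fproperEneq eqxx.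
rewrite -(delta_in_embedding emb Z0C) -{1}(fBid _ (fsubset_refl _)) -imfsetI; last exact: in2W.
by rewrite fBid ?fsubsetIr // ess.
Qed.

Lemma fresh_shift (B F : {fset nat}) : B `<=` F -> exists f : nat -> nat,
  [/\ injective f, {in B, f =1 id} & forall x, f x \in F -> x \in B].
Proof.
move=> BF; pose M := (\max_(y <- F) y).+1.
have outF x : (x + M)%N \notin F.
  by apply/negP => /(@leq_bigmax_seq _ _ xpredT id)/(_ isT); rewrite /= addnS ltnNge leq_addl.
exists (fun x => if x \in B then x else (x + M)%N); split=> [x y|x /= ->//|x].
- case: ifPn => xB; case: ifPn => yB xy //.
  + by move: (fsubsetP BF x xB); rewrite xy (negbTE (outF y)).
  + by move: (fsubsetP BF y yB); rewrite -xy (negbTE (outF x)).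
  + exact: addIn xy.
- by case: ifPn => // _; rewrite (negbTE (outF x)).
Qed.

Lemma essential_ext_copy B C gamma F : essential_ext B C gamma -> dom B `<=` F ->
  exists C',
    [/\ essential_ext B C' gamma, F `&` dom C' = dom B & #|` dom C'| = #|` dom C|].
Proof.
move=> eC BF; have [f [f_inj fB fF]] := fresh_shift BF.
have eC' := essential_ext_image f_inj fB eC.
exists (image_struct f C); split=> //.
  have [_ [BC' _] _ _] := eC'.
  apply/eqP; rewrite eqEfsubset fsubsetI BF BC' !andbT.
  apply/fsubsetP => y /fsetIP [yF /imfsetP [x _ yfx]]; rewrite yfx in yF *.
  by rewrite fB ?fF.
exact: card_imfset_sub (in2W f_inj) (fsubset_refl _).
Qed.

Section Tower.
Variables (B : struct L) (gamma : R) (n : nat).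
Hypothesis gamma_ge0 : 0 <= gamma.

(* The properties of the free amalgam of [k] copies, over [B], of a
   [gamma]-essential extension of [B] with [n] elements. *)
Definition tower k D :=
  [/\ wf ar D, sub B D, delta_in D (dom D) = delta alpha B - k%:R * gamma,
      forall X, X `<=` dom D -> ~~ (dom B `<=` X) || (#|` X| < n)%N ->
        delta_in B (X `&` dom B) <= delta_in D X
    & forall X, dom B `<=` X -> X `<` dom D ->
        delta alpha B - k%:R * gamma + gamma <= delta_in D X].

Lemma tower0 : wf ar B -> tower 0 B.
Proof.
move=> wB; split=> //.
- exact: sub_refl.
- by rewrite mul0r subr0 (delta_in_dom (sub_refl wB)).
- by move=> X XB _; rewrite (fsetIidPl XB).
by move=> X BX; rewrite fproperEneq eqEfsubset BX andbT andNb.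
Qed.

Lemma tower_level k D X : tower k D -> dom B `<=` X -> X `<=` dom D ->
  delta alpha B - k%:R * gamma <= delta_in D X.
Proof.
case=> _ _ dD _ lvl BX XD; have [->|XneD] := eqVneq X (dom D); first by rewrite dD.
by apply: le_trans (lvl X BX _); rewrite ?lerDl // fproperEneq XneD XD.
Qed.

Section Step.
Variables (k : nat) (D C : struct L).
Hypotheses (tD : tower k D) (eC : essential_ext B C gamma) (nC : #|` dom C| = n).
Hypothesis DC : dom D `&` dom C = dom B.

Let wD : wf ar D. Proof. by case: tD. Qed.
Let sBD : sub B D. Proof. by case: tD. Qed.
Let wC : wf ar C. Proof. by case: eC. Qed.
Let sBC : sub B C. Proof. by case: eC. Qed.
Let BD : dom B `<=` dom D. Proof. by case: sBD. Qed.
Let BC : dom B `<=` dom C. Proof. by case: sBC. Qed.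
Let delta_in_DC := delta_in_amalg wD wC sBD sBC DC.

Lemma tower_amalg_small X : X `<=` dom D `|` dom C ->
  ~~ (dom B `<=` X) || (#|` X| < n)%N ->
  delta_in B (X `&` dom B) <= delta_in (amalg D C) X.
Proof.
move=> XDC small; rewrite delta_in_DC //.
have XCneC : X `&` dom C `<` dom C.
  rewrite fproperEneq fsubsetIr andbT; apply: contraTneq small => XC.
  have CX : dom C `<=` X by rewrite -XC fsubsetIl.
  by rewrite negb_or negbK (fsubset_trans BC CX) -leqNgt -nC fsubset_leq_card.
have smallD : ~~ (dom B `<=` X `&` dom D) || (#|` X `&` dom D| < n)%N.
  move: small => /orP[notBX|small]; apply/orP; [left|right].
    by apply: contra notBX => BXD; apply: fsubset_trans BXD (fsubsetIl _ _).
  exact: leq_ltn_trans (fsubset_leq_card (fsubsetIl _ _)) small.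
have [_ _ _ small_D _] := tD; have [_ _ _ ess_C] := eC.
have := small_D _ (fsubsetIr _ _) smallD; have := ess_C _ XCneC.
by rewrite -!fsetIA (fsetIidPr BD) (fsetIidPr BC); lra.
Qed.

Lemma tower_amalg_proper X : dom B `<=` X -> X `<` dom D `|` dom C ->
  delta alpha B - k.+1%:R * gamma + gamma <= delta_in (amalg D C) X.
Proof.
move=> BX XDC; have XDC' := fproper_sub XDC; rewrite delta_in_DC //.
rewrite (fsetIidPr BX) (delta_in_dom sBD) mulrSr mulrDl mul1r.
have [_ _ _ _ proper_D] := tD; have [_ _ dC ess_C] := eC.
have BXD : dom B `<=` X `&` dom D by rewrite fsubsetI BX BD.
have [XC|XCneC] := eqVneq (X `&` dom C) (dom C).
  have XDneD : X `&` dom D `<` dom D.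
    rewrite fproperEneq fsubsetIr andbT; apply: contraTneq XDC => XD.
    by rewrite fproperEneq -XD -XC -fsetIUr (fsetIidPl XDC') eqxx.
  have := proper_D _ BXD XDneD; rewrite XC dC; lra.
have := ess_C (X `&` dom C); rewrite fproperEneq XCneC fsubsetIr => /(_ isT).
rewrite -fsetIA (fsetIidPr BC) (fsetIidPr BX) (delta_in_dom sBC).
have := tower_level tD BXD (fsubsetIr _ _); lra.
Qed.

Lemma tower_amalg : tower k.+1 (amalg D C).
Proof.
split.
- exact: wf_amalg.
- exact: sub_trans sBD (sub_amalgl wD wC sBD sBC DC).
- have [_ _ dD _ _] := tD; have [_ _ dC _] := eC.
  rewrite delta_in_DC // (fsetIidPr (fsubsetUl _ _)) (fsetIidPr (fsubsetUr _ _)).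
  rewrite (fsetIidPr (fsubset_trans BD (fsubsetUl _ _))) dD dC (delta_in_dom sBD).
  rewrite mulrSr mulrDl mul1r; lra.
- exact: tower_amalg_small.
exact: tower_amalg_proper.
Qed.

End Step.

Lemma tower_exists C k : wf ar B -> essential_ext B C gamma -> #|` dom C| = n ->
  exists D, tower k D.
Proof.
move=> wB eC nC; elim: k => [|k [D tD]]; first by exists B; apply: tower0.
have BD : dom B `<=` dom D by case: tD => _ [].
have [C' [eC' DC' nC']] := essential_ext_copy eC BD.
by exists (amalg D C'); apply: tower_amalg; rewrite ?nC'.
Qed.

Lemma tower_inK k D : inK ar alpha B -> 0 <= delta alpha B - k%:R * gamma ->
  tower k D -> inK ar alpha D.
Proof.
move=> [_ B_ge0] lvl_ge0 tD; have [wD _ _ small _] := tD; split=> // X XD.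
have [BX|notBX] := boolP (dom B `<=` X).
  exact: le_trans lvl_ge0 (tower_level tD BX XD).
by apply: le_trans (small X XD _); rewrite ?notBX ?B_ge0 ?fsubsetIr.
Qed.

Lemma tower_no_embedding k D G : tower k D -> minpair alpha B G ->
  (#|` dom G| < n)%N -> ~ embeds_over B G D.
Proof.
move=> [_ sBD _ small _] [sBG _ not_leBG] Gn [f [f_inj fB fD f_rel]].
apply: not_leBG; split=> // W BW WG.
rewrite -/(delta_in _ _) (delta_in_embedding (conj f_inj f_rel) WG).
have fWD : f @` W `<=` dom D.
  by apply/fsubsetP => _ /imfsetP [x xW ->]; apply/fD/(fsubsetP WG).
have BfW : dom B `<=` f @` W.
  by apply/fsubsetP => x xB; apply/imfsetP; exists x; rewrite ?fB ?(fsubsetP BW).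
have fW_small : (#|` f @` W| < n)%N.
  by rewrite (card_imfset_sub f_inj WG) (leq_ltn_trans (fsubset_leq_card WG) Gn).
by have := small _ fWD; rewrite fW_small orbT (fsetIidPr BfW) (delta_in_dom sBD); apply.
Qed.

End Tower.

Section TowerOver.
Variables (A B : struct L) (gamma : R) (n : nat).
Hypotheses (gamma_ge0 : 0 <= gamma) (leAB : le alpha A B).

Let sAB : sub A B. Proof. by case: leAB. Qed.
Let AB : dom A `<=` dom B. Proof. by case: sAB. Qed.

Lemma tower_meet_small k D Y : tower B gamma n k D -> Y `<=` dom D ->
  ~~ (dom B `<=` Y) -> delta_in D (Y `&` dom A) <= delta_in D Y.
Proof.
move=> [_ sBD _ small _] YD notBY.
rewrite -(delta_in_sub sBD) ?(fsubset_trans (fsubsetIr _ _) AB) //.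
have -> : Y `&` dom A = Y `&` dom B `&` dom A by rewrite -fsetIA (fsetIidPr AB).
apply: le_trans (le_delta_in_meet leAB (fsubsetIr _ _)) _.
by apply: small; rewrite ?notBY.
Qed.

Lemma tower_meet k D Y : delta alpha A <= delta alpha B - k%:R * gamma ->
  tower B gamma n k D -> Y `<=` dom D -> delta_in D (Y `&` dom A) <= delta_in D Y.
Proof.
move=> A_lvl tD YD; have [BY|] := boolP (dom B `<=` Y); last exact: tower_meet_small tD YD.
have [_ sBD _ _ _] := tD.
rewrite (fsetIidPr (fsubset_trans AB BY)) -(delta_sub (sub_trans sAB sBD)).
exact: le_trans A_lvl (tower_level gamma_ge0 tD BY YD).
Qed.

Lemma tower_meet_proper k D Y : delta alpha A <= delta alpha B - k%:R * gamma + gamma ->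
  tower B gamma n k D -> Y `<` dom D -> delta_in D (Y `&` dom A) <= delta_in D Y.
Proof.
move=> A_lvl tD YD; have YD' := fproper_sub YD.
have [BY|] := boolP (dom B `<=` Y); last exact: tower_meet_small tD YD'.
have [_ sBD _ _ proper_D] := tD.
rewrite (fsetIidPr (fsubset_trans AB BY)) -(delta_sub (sub_trans sAB sBD)).
exact: le_trans A_lvl (proper_D _ BY YD).
Qed.

Lemma tower_le k D : delta alpha A <= delta alpha B - k%:R * gamma ->
  tower B gamma n k D -> le alpha A D.
Proof.
move=> A_lvl tD; have [_ sBD _ _ _] := tD; have sAD := sub_trans sAB sBD.
split=> // X AX XD; rewrite (delta_sub sAD) -(fsetIidPr AX).
exact: tower_meet A_lvl tD XD.
Qed.

Lemma tower_deltaRel k D : tower B gamma n k D ->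
  deltaRel alpha D (dom D) (dom A) = delta alpha B - k%:R * gamma - delta alpha A.
Proof.
move=> [_ sBD dD _ _]; have sAD := sub_trans sAB sBD.
by rewrite deltaRelE ?dD ?(delta_sub sAD) //; case: sAD.
Qed.

Lemma tower_essential k D : inK ar alpha A -> inK ar alpha B ->
  0 <= delta alpha B - k%:R * gamma ->
  delta alpha B - k%:R * gamma < delta alpha A <= delta alpha B - k%:R * gamma + gamma ->
  tower B gamma n k D -> essential ar alpha A D.
Proof.
move=> hA hB lvl_ge0 /andP[lvl_A A_lvl] tD; have [_ sBD dD _ _] := tD.
have sAD := sub_trans sAB sBD; have AD : dom A `<=` dom D by case: sAD.
split=> //.
- by split=> //; apply: le_lt_trans lvl_ge0 lvl_A.
- exact: tower_inK tD.
- split=> // [X AX XD|[_ leAD]].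
    split=> [|Y AY YX]; first exact: sub_induced.
    rewrite (delta_sub sAD) -/(delta_in _ _) delta_in_induced // -(fsetIidPr AY).
    exact: tower_meet_proper A_lvl tD (fsub_proper_trans YX XD).
  by have := leAD (dom D) AD (fsubset_refl _); rewrite -/(delta_in _ _) dD; lra.
move=> X XD; rewrite deltaRelE ?fsubsetIl // subr_ge0.
exact: tower_meet_proper A_lvl tD XD.
Qed.

End TowerOver.

End Predimension.

Theorem lemma3p32 (L : finType) (ar : L -> nat) (R : realType) (alpha : L -> R)
  (har : forall E, (2 <= ar E)%N)
  (halpha : forall E, 0 < alpha E <= 1)
  (hnot : ~ ((forall E, ar E = 2%N) /\ (forall E, alpha E = 1)))
  (A B C : struct L)
  (hA : inK ar alpha A) (hB : inK ar alpha B) (hAB : le alpha A B)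
  (hBC : essential ar alpha B C) :
  let gamma := - deltaRel alpha C (dom C) (dom B) in
  (exists D : struct L,
     [/\ inK ar alpha D, sub B D, le alpha A D,
         0 <= deltaRel alpha D (dom D) (dom A) < gamma
       & forall G : struct L, wf ar G -> minpair alpha B G ->
           (#|` dom G| < #|` dom C|)%N -> ~ embeds_over B G D])
  /\
  (gamma <= delta alpha A ->
   exists D : struct L,
     [/\ inK ar alpha D, sub B D, essential ar alpha A D
       & - gamma <= deltaRel alpha D (dom D) (dom A) < 0]).
Proof.
move=> gamma.
have alpha_ge0 E : 0 <= alpha E by case/andP: (halpha E) => /ltW.
have [[sAB A_min] [wB B_ge0]] := (hAB, hB).
have eBC : essential_ext ar alpha B C gamma := essential_essential_ext hBC.
have gamma_gt0 : 0 < gamma.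
  by rewrite ltNge; apply/negP => /(essential_ext_le eBC); case: hBC => _ _ _ [].
have A_ge0 : 0 <= delta alpha A by rewrite (delta_sub _ sAB) B_ge0 //; case: sAB.
have BA_ge0 : 0 <= delta alpha B - delta alpha A.
  by rewrite subr_ge0 (delta_sub _ (sub_refl wB)) A_min //; case: sAB.
have gamma_ge0 := ltW gamma_gt0.
have /andP[] := truncn_mul_bounds BA_ge0 gamma_gt0.
set k := Num.truncn _; rewrite mulrSr mulrDl mul1r => k_lo k_hi.
have tower_k m := tower_exists gamma_ge0 m wB eBC (erefl #|` dom C|).
split.
  have [D tD] := tower_k k; have [_ sBD _ _ _] := tD.
  exists D; split=> //.
  - by apply: (tower_inK gamma_ge0 hB _ tD); lra.
  - by apply: (tower_le alpha_ge0 gamma_ge0 hAB _ tD); lra.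
  - by rewrite (tower_deltaRel hAB tD); apply/andP; split; lra.
  by move=> G _ mpG; apply: tower_no_embedding tD mpG.
move=> gamma_le_A; have [D tD] := tower_k k.+1; have [_ sBD _ _ _] := tD.
exists D; split=> //.
- by apply: (tower_inK gamma_ge0 hB _ tD); rewrite mulrSr mulrDl mul1r; lra.
- apply: (tower_essential alpha_ge0 gamma_ge0 hAB hA hB _ _ tD);
    rewrite mulrSr mulrDl mul1r; first lra.
  by apply/andP; split; lra.
by rewrite (tower_deltaRel hAB tD) mulrSr mulrDl mul1r; apply/andP; split; lra.
Qed.
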